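(* Let $H_2$ be the graph with vertex set $\{0,1,2,3,4,5,u_1,u_2\}$ and edge set $\{01,03,04,05,12,13,14,15,23,24,25,34,45,\ 3u_1,4u_1,5u_1,\ 3u_2,4u_2,5u_2\}$, and for $r\ge 2$ let $H_r$ be obtained from $H_2$ by adding vertices $u_3,\dots,u_r$, each adjacent exactly to $3,4,5$ (so $N(u_k)=N(u_1)=\{3,4,5\}$ for all $k$). Then for $r\ge 2$, $\operatorname{Z}(H_r)=r+2$, $\underline{z_0}(H_r)=r+3$, and $z_0(H_r)=r+5$.
   Context: Zero forcing on a graph $G$: starting with a set $S$ of blue vertices (others white), a blue vertex $v$ may change a white vertex $w$ to blue if $w$ is the only white neighbor of $v$. $S$ is a zero forcing set if repeated application colors all of $V(G)$ blue. $\operatorname{Z}(G)$ is the minimum size of a zero forcing set. $\mathscr{Z}^{\rm TAR}(G)$ has vertices the zero forcing sets of $G$, two adjacent iff their symmetric difference has size 1; $\mathscr{Z}^{\rm TAR}_k(G)$ is its subgraph induced by zero forcing sets of size at most $k$. $\underline{z_0}(G)$ is the least $k$ with $\mathscr{Z}^{\rm TAR}_k(G)$ connected; $z_0(G)$ is the least $k$ such that $\mathscr{Z}^{\rm TAR}_i(G)$ is connected for every $i=k,\dots,|V(G)|$. *)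

From mathcomp Require Import all_boot.
Set Implicit Arguments. Unset Strict Implicit. Unset Printing Implicit Defensive.

Section ZeroForcing.
Variables (T : finType) (adj : rel T).

Definition force_step (B : {set T}) : {set T} :=
  B :|: [set w | [exists v, [&& v \in B, adj v w, w \notin B &
                   [forall x, (adj v x && (x \notin B)) ==> (x == w)]]]].

Definition zfs (S : {set T}) : bool :=
  [exists n : 'I_#|T|.+1, iter n force_step S == [set: T]].

Definition Zf : nat := \big[minn/#|T|]_(S : {set T} | zfs S) #|S|.

Definition tar_adj (k : nat) : rel {set T} := fun S1 S2 =>
  [&& zfs S1, zfs S2, #|S1| <= k, #|S2| <= k &
      #|(S1 :\: S2) :|: (S2 :\: S1)| == 1].

(* Z^TAR_k(G) is connected (a connected graph is nonempty). *)
Definition tar_connected (k : nat) : Prop :=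
  (exists S : {set T}, zfs S && (#|S| <= k)) /\
  forall S1 S2 : {set T}, zfs S1 -> zfs S2 -> #|S1| <= k -> #|S2| <= k ->
    connect (tar_adj k) S1 S2.

Definition lz0 (k : nat) : Prop :=
  tar_connected k /\ forall j, j < k -> ~ tar_connected j.

Definition z0_good (k : nat) : Prop :=
  forall i, k <= i <= #|T| -> tar_connected i.
Definition is_z0 (k : nat) : Prop :=
  z0_good k /\ forall j, j < k -> ~ z0_good j.

End ZeroForcing.

(* The graph H_r: vertices inl i (i = 0..5) and inr k (= u_{k+1}, k < r). *)
Definition H_core_edges : seq (nat * nat) :=
  [:: (0,1); (0,3); (0,4); (0,5); (1,2); (1,3); (1,4); (1,5);
      (2,3); (2,4); (2,5); (3,4); (4,5)].

Definition Hadj (r : nat) : rel ('I_6 + 'I_r)%type := fun x y =>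
  match x, y with
  | inl i, inl j => ((nat_of_ord i, nat_of_ord j) \in H_core_edges)
                    || ((nat_of_ord j, nat_of_ord i) \in H_core_edges)
  | inl i, inr _ => (3 <= i)
  | inr _, inl j => (3 <= j)
  | inr _, inr _ => false
  end.

From HB Require Import structures.
From mathcomp Require Import all_boot zify.
Set Implicit Arguments. Unset Strict Implicit. Unset Printing Implicit Defensive.

(* The vertices u_1, ..., u_r of H_r are pairwise twins, so a zero forcing set
   contains all of them except at most one, say u_j.  Collapsing u_j to u_2 and
   every other u_k to u_1 maps H_r onto H_2; it commutes with forcing as long as
   u_1 is blue, and it shifts sizes by r - 2 while preserving symmetric
   differences.  Hence Z^TAR_{r+d}(H_r) is governed by the zero forcing sets of
   H_2 that contain u_1, a finite family that is examined by computation: their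
   sizes, the connectivity of Z^TAR_{d+2} for d = 3, 5, 6, and the isolated set
   {0,1,2,3,u_1,u_2} at d = 4.  At level r + 2 no zero forcing set contains every
   u_k, and adjacent sets must miss the same u_k, so that level is disconnected. *)

HB.instance Definition _ := SemiGroup.isComLaw.Build nat minn minnA minnC.

Section ZeroForcingTheory.
Variables (T : finType) (adj : rel T).
Implicit Types (B S : {set T}).

Local Notation F := (force_step adj).

Lemma subset_force_step B : B \subset F B.
Proof. exact: subsetUl. Qed.

Lemma subset_iter_force_step S m n : m <= n -> iter m F S \subset iter n F S.
Proof.
move=> /subnK <-; rewrite iterD.
by elim: (n - m) => //= k IHk; apply: subset_trans IHk (subset_force_step _).
Qed.

Lemma iter_force_step_stable S n : #|T| <= n -> iter n F S = iter #|T| F S.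
Proof.
suff fixT : F (iter #|T| F S) = iter #|T| F S.
  by move=> /subnK <-; rewrite iterD iter_fix.
suff /'exists_eqP[k /= e] : [exists k : 'I_#|T|.+1, iter k F S == iter k.+1 F S].
  by rewrite -(subnK (leq_ord k)) iterD -iterS iterSr -e.
apply: contraT => /existsPn /(_ (Ordinal _)) /= neq_iter.
suff iter_big k : k <= #|T|.+1 -> k <= #|iter k F S|.
  by have := iter_big _ (leqnn _); rewrite ltnNge max_card.
elim: k => [|k IHk] k_lt //=; apply: (leq_ltn_trans (IHk (ltnW k_lt))).
by rewrite proper_card // properEneq subset_force_step neq_iter.
Qed.

Lemma zfsE S : zfs adj S = (iter #|T| F S == setT).
Proof.
apply/existsP/eqP => [[n /eqP full] | full]; last by exists ord_max; rewrite /= full.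
apply/eqP; rewrite eqEsubset subsetT -full subset_iter_force_step //.
by rewrite -ltnS.
Qed.

Lemma zfsP S : reflect (exists n, iter n F S = setT) (zfs adj S).
Proof.
rewrite zfsE; apply: (iffP eqP) => [full | [n full]]; first by exists #|T|.
have [/iter_force_step_stable <- // | /ltnW le_n] := leqP #|T| n.
by apply/eqP; rewrite eqEsubset subsetT -full subset_iter_force_step.
Qed.

(* A blue vertex adjacent to one of two white twins also sees the other one. *)
Lemma zfs_twins S x y : x != y -> (forall v, adj v x = adj v y) -> zfs adj S ->
  (x \in S) || (y \in S).
Proof.
move=> neq_xy twin /zfsP[n full]; apply: contraTT isT => /norP[xS yS].
suff : (x \notin iter n F S) && (y \notin iter n F S) by rewrite full !inE.
elim: n {full} => [|n /andP[xB yB]] /=; first by rewrite xS.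
have notF z z' : z != z' -> (forall v, adj v z = adj v z') ->
    z \notin iter n F S -> z' \notin iter n F S -> z \notin F (iter n F S).
  move=> neq tw zB z'B; rewrite !inE negb_or zB /=.
  apply/negP => /existsP[v /and3P[_ vz /forallP/(_ z')]].
  by rewrite -tw vz z'B eq_sym (negbTE neq).
by rewrite (notF x y) ?(notF y x) // eq_sym.
Qed.

Lemma tar_adj_sym k : symmetric (tar_adj adj k).
Proof.
by move=> S1 S2; rewrite /tar_adj setUC andbCA; congr [&& _, _ & _]; rewrite andbCA.
Qed.

Lemma tar_disconnected k (P : pred {set T}) S1 S2 :
  (forall S S', tar_adj adj k S S' -> P S -> P S') ->
  zfs adj S1 -> zfs adj S2 -> #|S1| <= k -> #|S2| <= k -> P S1 -> ~~ P S2 ->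
  ~ tar_connected adj k.
Proof.
move=> P_closed z1 z2 c1 c2 P1 nP2 [_ /(_ S1 S2 z1 z2 c1 c2) conn12].
have closedP : closed (tar_adj adj k) P.
  by move=> S S' adjS; apply/idP/idP; apply: P_closed; rewrite // tar_adj_sym.
by move: (closed_connect closedP conn12); rewrite !unfold_in P1 (negbTE nP2).
Qed.

Lemma Zf_eq m : (exists2 S, zfs adj S & #|S| = m) ->
  (forall S, zfs adj S -> m <= #|S|) -> Zf adj = m.
Proof.
move=> [S0 zS0 <-] lb; apply/eqP; rewrite eqn_leq; apply/andP; split.
  by rewrite /Zf (bigD1 S0) //= geq_minl.
apply: (big_ind (leq #|S0|)) => [|x y|S /lb] //; first exact: max_card.
by rewrite leq_min => ->.
Qed.

End ZeroForcingTheory.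

Section Pullback.
Variables (T T' : finType) (adj : rel T) (adj' : rel T') (f : T' -> T).
Hypothesis adj'E : forall x y, adj' x y = adj (f x) (f y).
Hypothesis f_surj : forall z, exists x, f x = z.

(* [f] need only be injective on white vertices: a white neighbour of [f v]
   then has exactly one preimage, and it is a white neighbour of [v]. *)
Lemma force_step_preimset (A : {set T}) :
  {in [pred x | f x \notin A] &, injective f} ->
  force_step adj' (f @^-1: A) = f @^-1: force_step adj A.
Proof.
move=> f_inj; apply/setP => w; rewrite !inE; congr (_ || _).
apply/existsP/existsP => [[v /and4P[]] | [z /and4P[]]].
  rewrite !inE adj'E => vA vw wA /forallP only_w; exists (f v).
  rewrite vA vw wA; apply/forallP => z; have [x <-] := f_surj z.
  by apply/implyP => xw; move: (only_w x); rewrite inE adj'E xw => /eqP ->.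
have [v <-] := f_surj z => vA vw wA /forallP only_w.
exists v; rewrite !inE adj'E vA vw wA; apply/forallP => x; rewrite inE adj'E.
apply/implyP => /andP[vx xA]; move: (only_w (f x)); rewrite vx xA => /eqP fxw.
by apply/eqP/f_inj; rewrite ?inE ?fxw.
Qed.

Lemma zfs_preimset (A : {set T}) :
  {in [pred x | f x \notin A] &, injective f} ->
  zfs adj' (f @^-1: A) = zfs adj A.
Proof.
move=> f_inj.
have iterE n : iter n (force_step adj') (f @^-1: A) = f @^-1: iter n (force_step adj) A.
  elim: n => //= n ->; apply: force_step_preimset => x y /[!inE] xB yB.
  have sub := subsetP (subset_iter_force_step adj A (leq0n n)).
  by apply: f_inj; rewrite inE; apply: contra (sub _) _.
have full_preim (B : {set T}) : (f @^-1: B == setT) = (B == setT).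
  apply/eqP/eqP => [/setP B_full | ->]; last exact: preimsetT.
  by apply/setP => z; have [x <-] := f_surj z; have := B_full x; rewrite !inE.
by apply/zfsP/zfsP => -[n /eqP full]; exists n; apply/eqP; rewrite ?iterE full_preim in full *.
Qed.

End Pullback.

Fixpoint bitseqs (n : nat) : seq (seq bool) :=
  if n is n'.+1 then [seq b :: s | b <- [:: false; true], s <- bitseqs n']
  else [:: [::]].

Lemma mem_bitseqs s : s \in bitseqs (size s).
Proof. by elim: s => [|b s IHs] //; apply: allpairs_f => //; case: b. Qed.

Section ComputableForcing.
Variables (T : finType) (adj : rel T) (vs : seq T) (num : T -> nat).
Hypotheses (vs_uniq : uniq vs) (mem_vs : forall x, x \in vs).
Hypothesis num_index : forall x, num x = index x vs.

Definition cmem (s : seq bool) (x : T) : bool := nth false s (num x).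
Definition code (B : {set T}) : seq bool := [seq x \in B | x <- vs].
Definition decode (s : seq bool) : {set T} := [set x | cmem s x].

Definition cforce_step (s : seq bool) : seq bool :=
  [seq cmem s w || has (fun v => [&& cmem s v, adj v w, ~~ cmem s w &
      all (fun x => (adj v x && ~~ cmem s x) ==> (x == w)) vs]) vs | w <- vs].
Definition czfs (s : seq bool) : bool :=
  all (cmem (iter (size vs) cforce_step s)) vs.
Definition ccard (s : seq bool) : nat := count (cmem s) vs.
Definition cdist (s t : seq bool) : nat := count (fun x => cmem s x != cmem t x) vs.

Lemma cmem_map (g : T -> bool) x : cmem [seq g y | y <- vs] x = g x.
Proof. by rewrite /cmem num_index (nth_map x) ?nth_index ?index_mem. Qed.

Lemma decode_code B : decode (code B) = B.
Proof. by apply/setP => x; rewrite inE cmem_map. Qed.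

Lemma decode_bitseqs B : exists2 s, s \in bitseqs (size vs) & B = decode s.
Proof. by exists (code B); rewrite ?decode_code // -(size_map (mem B)) mem_bitseqs. Qed.

Lemma decode_cforce_step s : decode (cforce_step s) = force_step adj (decode s).
Proof.
apply/setP => w; rewrite !inE cmem_map; congr (_ || _).
apply/hasP/existsP => [[v _ /and4P[vs' vw ws' only_w]] | [v]].
  exists v; rewrite !inE vs' vw ws'; apply/forallP => x; rewrite inE.
  exact: (allP only_w).
rewrite !inE => /and4P[vs' vw ws' /forallP only_w].
exists v => //; rewrite vs' vw ws'; apply/allP => x _.
by move: (only_w x); rewrite inE.
Qed.

Lemma czfsE s : czfs s = zfs adj (decode s).
Proof.
have card_T : #|T| = size vs.
  by rewrite -(card_uniqP vs_uniq); apply: eq_card => x; rewrite mem_vs.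
have iterE n : decode (iter n cforce_step s) = iter n (force_step adj) (decode s).
  by elim: n => //= n IHn; rewrite decode_cforce_step IHn.
rewrite zfsE card_T -iterE; apply/allP/eqP => [full | full x _].
  by apply/setP => x; rewrite !inE full.
by have := in_setT x; rewrite -full inE.
Qed.

Lemma card_set_count (P : pred T) : #|[set x | P x]| = count P vs.
Proof.
rewrite -size_filter -(card_uniqP (filter_uniq P vs_uniq)).
by apply: eq_card => x; rewrite inE mem_filter mem_vs andbT.
Qed.

Lemma ccardE s : ccard s = #|decode s|.
Proof. exact/esym/card_set_count. Qed.

Lemma cdistE s t :
  cdist s t = #|(decode s :\: decode t) :|: (decode t :\: decode s)|.
Proof.
rewrite /cdist -card_set_count; apply: eq_card => x; rewrite !inE.
by case: (cmem s x); case: (cmem t x).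
Qed.

End ComputableForcing.

Section BreadthFirstSearch.
Variables (U : eqType) (e : rel U) (V : seq U).

Definition bfs_step (R : seq U) : seq U :=
  R ++ [seq y <- V | (y \notin R) && has (e^~ y) R].

Fixpoint bfs (fuel : nat) (R : seq U) : seq U :=
  if fuel is n.+1 then
    let R' := bfs_step R in if R' == R then R else bfs n R'
  else R.

Lemma bfs_connect (T : finType) (e' : rel T) (f : U -> T) x n :
  {in V &, forall y z, e y z -> e' (f y) (f z)} -> x \in V ->
  all (mem (bfs n [:: x])) V -> {in V, forall y, connect e' (f x) (f y)}.
Proof.
move=> e_hom xV /allP reach_all y /reach_all {reach_all}.
pose P y := (y \in V) && connect e' (f x) (f y).
suff : {in bfs n [:: x], forall y, P y} by move=> reach /reach /andP[].
have step R : {in R, forall y, P y} -> {in bfs_step R, forall y, P y}.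
  move=> PR z; rewrite mem_cat mem_filter.
  case/orP => [/PR // | /andP[/andP[_ /hasP[t tR tz]] zV]].
  by case/andP: (PR t tR) => tV xt; rewrite /P zV (connect_trans xt) // connect1 // e_hom.
have : {in [:: x], forall y, P y}.
  by move=> z; rewrite mem_seq1 => /eqP ->; rewrite /P xV connect0.
by elim: n [:: x] => [|n IHn] R PR //=; case: ifP => // _; apply/IHn/step.
Qed.

End BreadthFirstSearch.

Lemma card_sum_set (A B : finType) (S : {set A + B}) :
  #|S| = #|[set a | inl a \in S]| + #|[set b | inr b \in S]|.
Proof. by rewrite -!sum1dep_card -sum1_card big_sumType. Qed.

Lemma connect_homo (T T' : finType) (e : rel T) (e' : rel T') (f : T -> T') :
  (forall x y, e x y -> e' (f x) (f y)) ->
  forall x y, connect e x y -> connect e' (f x) (f y).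
Proof.
move=> hom x y /connectP[p]; elim: p x => [x _ -> // | z p IHp x /= /andP[xz pz] yp].
exact: connect_trans (connect1 (hom _ _ xz)) (IHp z pz yp).
Qed.

Local Notation H2 := ('I_6 + 'I_2)%type.

Definition u1 : 'I_2 := ord0.
Definition u2 : 'I_2 := ord_max.

Definition H2_vertices : seq H2 :=
  [:: inl (@Ordinal 6 0 isT); inl (@Ordinal 6 1 isT); inl (@Ordinal 6 2 isT);
      inl (@Ordinal 6 3 isT); inl (@Ordinal 6 4 isT); inl (@Ordinal 6 5 isT);
      inr u1; inr u2].

Definition H2_index (x : H2) : nat := match x with inl i => i | inr k => 6 + k end.

Lemma H2_vertices_uniq : uniq H2_vertices. Proof. by []. Qed.

Lemma mem_H2_vertices x : x \in H2_vertices.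
Proof. by case: x => -[[|[|[|[|[|[|[|]]]]]]] //]. Qed.

Lemma H2_indexE x : H2_index x = index x H2_vertices.
Proof. by case: x => -[[|[|[|[|[|[|[|]]]]]]] //]. Qed.

Local Notation czfs_H2E := (czfsE (@Hadj 2) H2_vertices_uniq mem_H2_vertices H2_indexE).
Local Notation ccard_H2E := (ccardE H2_index H2_vertices_uniq mem_H2_vertices).
Local Notation cdist_H2E := (cdistE H2_index H2_vertices_uniq mem_H2_vertices).

(* [core_set C b] consists of the vertices of [C] among 0, ..., 5, of u_1,
   and of u_2 when [b] holds. *)
Definition core_code (C : seq nat) (b : bool) : seq bool :=
  [seq i \in C | i <- iota 0 6] ++ [:: true; b].

Definition core_set (C : seq nat) (b : bool) : {set H2} :=
  decode H2_index (core_code C b).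

Definition H2_min : {set H2} := core_set [:: 0; 3; 4] false.
Definition H2_hub : {set H2} := core_set [:: 0; 3; 4] true.
Definition H2_iso : {set H2} := core_set [:: 0; 1; 2; 3] true.

Lemma core_set_u1 C b : inr u1 \in core_set C b.
Proof. by rewrite inE. Qed.

Lemma core_set_u2 C b : (inr u2 \in core_set C b) = b.
Proof. by rewrite inE. Qed.

Lemma H2_witnesses_zfs :
  [/\ zfs (@Hadj 2) H2_min, zfs (@Hadj 2) H2_hub & zfs (@Hadj 2) H2_iso].
Proof. by rewrite -!czfs_H2E; split; vm_compute. Qed.

Lemma H2_witnesses_card : [/\ #|H2_min| = 4, #|H2_hub| = 5 & #|H2_iso| = 6].
Proof. by rewrite -!ccard_H2E. Qed.

(* A closed constant: [vm_compute] evaluates it once and shares the value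
   between all the checks below. *)
Definition H2_zfs_codes : seq (seq bool) :=
  [seq s <- bitseqs 8 | cmem H2_index s (inr u1) && czfs (@Hadj 2) H2_vertices H2_index s].

Lemma H2_zfs_codesP (A : {set H2}) : inr u1 \in A -> zfs (@Hadj 2) A ->
  exists2 s, s \in H2_zfs_codes & A = decode H2_index s.
Proof.
have [s sB -> /[!inE] A1 zA] := decode_bitseqs mem_H2_vertices H2_indexE A.
by exists s; last by []; rewrite mem_filter A1 czfs_H2E zA sB.
Qed.

Lemma H2_card_check :
  all (fun s => 4 + cmem H2_index s (inr u2) <= ccard H2_vertices H2_index s) H2_zfs_codes.
Proof. by vm_compute. Qed.

Lemma card_zfs_H2 (A : {set H2}) : inr u1 \in A -> zfs (@Hadj 2) A ->
  4 + (inr u2 \in A) <= #|A|.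
Proof.
move=> A1 zA; have [s sZ ->] := H2_zfs_codesP A1 zA.
by rewrite inE -ccard_H2E; apply: (allP H2_card_check).
Qed.

Definition H2_tar_codes (k : nat) : seq (seq bool) :=
  [seq s <- H2_zfs_codes | ccard H2_vertices H2_index s <= k].

(* Written without [let], so that unfolding it exposes the arguments of [bfs]
   syntactically and type checking never evaluates the search. *)
Definition H2_connected_check (k : nat) : bool :=
  (core_code [:: 0; 3; 4] true \in H2_tar_codes k) &&
  all (mem (bfs (fun s t => cdist H2_vertices H2_index s t == 1) (H2_tar_codes k)
                (size (H2_tar_codes k)) [:: core_code [:: 0; 3; 4] true]))
      (H2_tar_codes k).

Lemma H2_connected_checks d : d \in [:: 3; 5; 6] -> H2_connected_check d.+2.
Proof. by rewrite !inE => /or3P[] /eqP ->; vm_compute. Qed.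

Definition tar_adj_u1 (k : nat) : rel {set H2} :=
  fun A B => [&& inr u1 \in A, inr u1 \in B & tar_adj (@Hadj 2) k A B].

Lemma connect_H2 d (A : {set H2}) : d \in [:: 3; 5; 6] ->
  inr u1 \in A -> zfs (@Hadj 2) A -> #|A| <= d.+2 -> connect (tar_adj_u1 d.+2) H2_hub A.
Proof.
move=> d_ok A1 zA; have [s sZ -> cA] := H2_zfs_codesP A1 zA.
have := H2_connected_checks d_ok; rewrite /H2_connected_check => /andP[hubV reach].
apply: (bfs_connect _ hubV reach); last by rewrite mem_filter ccard_H2E cA sZ.
move=> t t' /[!mem_filter] /andP[ct /andP[/andP[t1 zt] _]].
move=> /andP[ct' /andP[/andP[t'1 zt'] _]] /eqP dist1.
rewrite /tar_adj_u1 /tar_adj !inE t1 t'1 -!czfs_H2E zt zt'.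
by rewrite -!ccard_H2E ct ct' -cdist_H2E dist1.
Qed.

Lemma H2_isolated_check :
  all (fun s => (ccard H2_vertices H2_index s <= 6) ==>
         (cdist H2_vertices H2_index (core_code [:: 0; 1; 2; 3] true) s != 1))
      H2_zfs_codes.
Proof. by vm_compute. Qed.

Lemma H2_isolated (B : {set H2}) : inr u1 \in B -> ~~ tar_adj (@Hadj 2) 6 H2_iso B.
Proof.
move=> B1; apply/negP => /and5P[_ zB _ cB /eqP dist1].
have [s sZ eB] := H2_zfs_codesP B1 zB; subst B.
by move: (allP H2_isolated_check s sZ); rewrite ccard_H2E cB cdist_H2E dist1.
Qed.

Lemma card_inr_H2 (D : {set H2}) :
  #|[set b | inr b \in D]| = (inr u1 \in D) + (inr u2 \in D).
Proof.
rewrite -sum1dep_card big_mkcond big_ord_recr big_ord1 /= -[ord_max]/u2.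
rewrite (_ : widen_ord _ _ = u1); last exact: val_inj.
by case: (inr u1 \in D); case: (inr u2 \in D).
Qed.

Section Collapse.
Variables (r : nat) (j : 'I_r).

Definition collapse (x : 'I_6 + 'I_r) : H2 :=
  match x with inl i => inl i | inr k => inr (if k == j then u2 else u1) end.

Lemma Hadj_collapse x y : Hadj x y = Hadj (collapse x) (collapse y).
Proof. by case: x y => [i|k] [i'|k']. Qed.

Lemma collapse_surj : 1 < r -> forall z, exists x, collapse x = z.
Proof.
move=> r_gt1 [i | b]; first by exists (inl i).
have [k kj] : exists k, k != j.
  have /card_gt0P[k] : 0 < #|[set~ j]| by rewrite cardsC1 card_ord -subn1 subn_gt0.
  by rewrite !inE; exists k.
case: b => -[|[|//]] b_lt; [exists (inr k) | exists (inr j)];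
  by rewrite /= ?eqxx ?(negbTE kj); congr inr; apply: val_inj.
Qed.

Lemma collapse_inj : {in [pred x | collapse x != inr u1] &, injective collapse}.
Proof.
have to_u2 k : inr k \in [pred x | collapse x != inr u1] -> k = j.
  by rewrite inE /=; case: (eqVneq k j) => // _; rewrite eqxx.
by move=> [i|k] [i'|k'] //= => [_ _ [->] | /to_u2 -> /to_u2 ->].
Qed.

Lemma zfs_collapse (A : {set H2}) : 1 < r -> inr u1 \in A ->
  zfs (@Hadj r) (collapse @^-1: A) = zfs (@Hadj 2) A.
Proof.
move=> r_gt1 A1; apply: (zfs_preimset Hadj_collapse (collapse_surj r_gt1)).
have white z : collapse z \notin A -> z \in [pred x | collapse x != inr u1].
  by rewrite inE; apply: contraNneq => ->.
by move=> x y /[!inE] /white xu /white yu; apply: collapse_inj.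
Qed.

Lemma card_collapse_inr (b1 b2 : bool) :
  #|[set k : 'I_r | if k == j then b2 else b1]| + b1 = b2 + b1 * r.
Proof.
have r_gt0 : 0 < r := leq_ltn_trans (leq0n _) (ltn_ord j).
case: b1 b2 => [] [];
  [ rewrite (_ : [set k | _] = setT) ?cardsT ?card_ord
  | rewrite (_ : [set k | _] = [set~ j]) ?cardsC1 ?card_ord
  | rewrite (_ : [set k | _] = [set j]) ?cards1
  | rewrite (_ : [set k | _] = set0) ?cards0 ];
  try (apply/setP => k; rewrite !inE; case: eqP); lia.
Qed.

(* u_1 has r - 1 preimages, every other vertex of H2 exactly one. *)
Lemma card_collapse (D : {set H2}) :
  #|collapse @^-1: D| + (inr u1 \in D) * 2 = #|D| + (inr u1 \in D) * r.
Proof.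
rewrite !card_sum_set -!addnA; congr (_ + _); first by apply: eq_card => i; rewrite !inE.
rewrite card_inr_H2; have -> : [set k | inr k \in collapse @^-1: D] =
                               [set k | if k == j then inr u2 \in D else inr u1 \in D].
  by apply/setP => k; rewrite !inE /=; case: eqP.
have h := card_collapse_inr (inr u1 \in D) (inr u2 \in D).
by rewrite muln2 -addnn addnA h addnC addnA.
Qed.

Lemma card_collapse_u1 (A : {set H2}) : inr u1 \in A ->
  #|collapse @^-1: A| + 2 = #|A| + r.
Proof. by move=> A1; have := card_collapse A; rewrite A1 !mul1n. Qed.

Lemma card_collapse_le d (A : {set H2}) : inr u1 \in A ->
  (#|collapse @^-1: A| <= r + d) = (#|A| <= d.+2).
Proof.
move=> A1; rewrite -(leq_add2r 2) card_collapse_u1 //.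
by rewrite addnC -addnA leq_add2l addn2.
Qed.

Lemma tar_adj_collapse d (A B : {set H2}) : 1 < r -> inr u1 \in A -> inr u1 \in B ->
  tar_adj (@Hadj r) (r + d) (collapse @^-1: A) (collapse @^-1: B) =
  tar_adj (@Hadj 2) d.+2 A B.
Proof.
move=> r_gt1 A1 B1; rewrite /tar_adj !zfs_collapse // !card_collapse_le //.
rewrite -!preimsetD -preimsetU.
have := card_collapse ((A :\: B) :|: (B :\: A)).
by rewrite !inE A1 B1 /= !addn0 => ->.
Qed.

End Collapse.

Lemma preimset_collapse_full r (j j' : 'I_r) (A : {set H2}) :
  inr u1 \in A -> inr u2 \in A -> collapse j @^-1: A = collapse j' @^-1: A.
Proof.
move=> A1 A2; apply/setP => -[i | k]; rewrite !inE //=.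
by case: (k == j); case: (k == j'); rewrite ?A1 ?A2.
Qed.

Lemma Hadj_twins r (k k' : 'I_r) v : Hadj v (inr k) = Hadj v (inr k').
Proof. by case: v. Qed.

Lemma zfs_Hadj_collapse r (S : {set 'I_6 + 'I_r}) : 1 < r -> zfs (@Hadj r) S ->
  exists j (A : {set H2}), inr u1 \in A /\ S = collapse j @^-1: A.
Proof.
move=> r_gt1 zS.
have [j Sj] : exists j : 'I_r, forall k, k != j -> inr k \in S.
  case: (pickP [pred k | inr k \notin S]) => [j /= jS | S_full].
    exists j => k kj; have := zfs_twins (x := inr k) (y := inr j) _ (Hadj_twins k j) zS.
    by rewrite (negbTE jS) orbF; apply; apply: contra kj => /eqP [->].
  by exists (Ordinal (ltnW r_gt1)) => k _; apply/negbFE/S_full.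
exists j, [set x | if x is inl i then inl i \in S else (x == inr u1) || (inr j \in S)].
split; first by rewrite inE eqxx.
apply/setP => -[i | k]; rewrite !inE //=.
by case: (eqVneq k j) => [-> // | kj]; rewrite Sj.
Qed.

Lemma card_zfs_Hadj r (S : {set 'I_6 + 'I_r}) : 1 < r -> zfs (@Hadj r) S ->
  r + 2 + [forall k, inr k \in S] <= #|S|.
Proof.
move=> r_gt1 zS; have [j [A [A1 eS]]] := zfs_Hadj_collapse r_gt1 zS; subst S.
rewrite zfs_collapse // in zS.
have full : [forall k, inr k \in collapse j @^-1: A] <= (inr u2 \in A).
  by case: forallP => // /(_ j); rewrite inE /= eqxx => ->.
rewrite -(leq_add2r 2) card_collapse_u1 // (addnC #|A|) -!addnA leq_add2l.
apply: leq_trans (card_zfs_H2 A1 zS); rewrite (addnC _ 2) addnA leq_add2l.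
exact: full.
Qed.

Lemma Zf_Hadj r : 1 < r -> Zf (@Hadj r) = r + 2.
Proof.
move=> r_gt1; apply: Zf_eq => [|S /(card_zfs_Hadj r_gt1)]; last first.
  exact: leq_trans (leq_addr _ _).
have [z_min _ _] := H2_witnesses_zfs; have [c_min _ _] := H2_witnesses_card.
exists (collapse (Ordinal (ltnW r_gt1)) @^-1: H2_min).
  by rewrite zfs_collapse ?core_set_u1.
by apply/eqP; rewrite -(eqn_add2r 2) card_collapse_u1 ?core_set_u1 // c_min addnC -addnA.
Qed.

Lemma Hadj_tar_connected r d : 1 < r -> d \in [:: 3; 5; 6] -> tar_connected (@Hadj r) (r + d).
Proof.
move=> r_gt1 d_ok; pose j0 : 'I_r := Ordinal (ltnW r_gt1).
have [_ z_hub _] := H2_witnesses_zfs; have [_ c_hub _] := H2_witnesses_card.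
have reach S : zfs (@Hadj r) S -> #|S| <= r + d ->
    connect (tar_adj (@Hadj r) (r + d)) (collapse j0 @^-1: H2_hub) S.
  move=> zS cS; have [j [A [A1 eS]]] := zfs_Hadj_collapse r_gt1 zS; subst S.
  rewrite (preimset_collapse_full j0 j) ?core_set_u1 ?core_set_u2 //.
  apply: (connect_homo (e := tar_adj_u1 d.+2) (f := fun B => collapse j @^-1: B)).
    by move=> B C /and3P[B1 C1]; rewrite tar_adj_collapse.
  by rewrite zfs_collapse // card_collapse_le // in zS cS; apply: connect_H2.
split.
  exists (collapse j0 @^-1: H2_hub).
  rewrite zfs_collapse ?card_collapse_le ?core_set_u1 // z_hub c_hub.
  by move: d_ok; rewrite !inE => /or3P[] /eqP ->.
move=> S1 S2 z1 z2 c1 c2; apply: connect_trans (reach _ z2 c2).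
by rewrite (sym_connect_sym (@tar_adj_sym _ _ _)) reach.
Qed.

(* Below r + 3 every zero forcing set misses some u_k, and adjacent sets miss
   the same one. *)
Lemma Hadj_tar_disconnected2 r : 1 < r -> ~ tar_connected (@Hadj r) (r + 2).
Proof.
move=> r_gt1; pose j1 : 'I_r := Ordinal (ltnW r_gt1); pose j2 : 'I_r := Ordinal r_gt1.
have [z_min _ _] := H2_witnesses_zfs; have [c_min _ _] := H2_witnesses_card.
pose S (j : 'I_r) := collapse j @^-1: H2_min.
have zS (j : 'I_r) : zfs (@Hadj r) (S j) by rewrite zfs_collapse ?core_set_u1.
have cS (j : 'I_r) : #|S j| <= r + 2 by rewrite card_collapse_le ?core_set_u1 ?c_min.
apply: (tar_disconnected (P := fun S => inr j1 \notin S) _ (zS j1) (zS j2) (cS j1) (cS j2)).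
- move=> T T' /and5P[zT zT' _ cT' /cards1P[x sdT]] j1T; apply/negP => j1T'.
  have /forallPn[k kT'] : ~~ [forall k, inr k \in T'].
    apply/negP => full; have := leq_trans (card_zfs_Hadj r_gt1 zT') cT'.
    by rewrite full addn1 ltnn.
  have kj1 : k != j1 by apply: contraNneq kT' => ->.
  have := zfs_twins (x := inr k) (y := inr j1) _ (Hadj_twins k j1) zT.
  rewrite (negbTE j1T) orbF => /(_ _)/wrap[]; first by apply: contra kj1 => /eqP [->].
  have inD z : z \in (T :\: T') :|: (T' :\: T) -> z = x by rewrite sdT in_set1 => /eqP.
  move=> kT; have [] := (inD (inr k), inD (inr j1)); rewrite !inE kT kT' j1T j1T' /=.
  by move=> /(_ isT) <- /(_ isT) [jk]; rewrite jk eqxx in kj1.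
- by rewrite inE /= ?eqxx core_set_u2.
- by rewrite negbK inE /= core_set_u1.
Qed.

Lemma Hadj_tar_disconnected4 r : 1 < r -> ~ tar_connected (@Hadj r) (r + 4).
Proof.
move=> r_gt1; pose j0 : 'I_r := Ordinal (ltnW r_gt1).
have [_ z_hub z_iso] := H2_witnesses_zfs; have [_ c_hub c_iso] := H2_witnesses_card.
pose S_iso := collapse j0 @^-1: H2_iso.
apply: (tar_disconnected (P := fun S => S == S_iso) (S1 := S_iso)
                         (S2 := collapse j0 @^-1: H2_hub));
  rewrite ?zfs_collapse ?card_collapse_le ?core_set_u1 ?z_hub ?z_iso ?c_hub ?c_iso ?eqxx //.
- move=> T T' adjTT' /eqP eT; subst T; exfalso.
  have /and5P[_ zT' _ _ _] := adjTT'.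
  have [j [B [B1 eT']]] := zfs_Hadj_collapse r_gt1 zT'; subst T'.
  move: adjTT'; rewrite /S_iso (preimset_collapse_full j0 j) ?core_set_u1 ?core_set_u2 //.
  by rewrite tar_adj_collapse ?core_set_u1 // (negbTE (H2_isolated B1)).
- by apply/eqP => /setP/(_ (inl (@Ordinal 6 1 isT))); rewrite !inE.
Qed.

Theorem proposition3p9 (r : nat) : 2 <= r ->
  Zf (@Hadj r) = r + 2 /\ lz0 (@Hadj r) (r + 3) /\ is_z0 (@Hadj r) (r + 5).
Proof.
move=> r_gt1; have cardT : #|{: 'I_6 + 'I_r}| = r + 6 by rewrite card_sum !card_ord addnC.
split; first exact: Zf_Hadj.
split; split.
- exact: (@Hadj_tar_connected r 3 r_gt1 isT).
- move=> k; rewrite addnS ltnS leq_eqVlt => /orP[/eqP -> | k_small [[S /andP[zS cS]] _]].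
    exact: Hadj_tar_disconnected2.
  have := leq_trans (leq_trans (leq_addr _ _) (card_zfs_Hadj r_gt1 zS)) cS.
  by rewrite leqNgt k_small.
- move=> i /andP[lo hi]; rewrite cardT in hi.
  have [-> | ->] : i = r + 5 \/ i = r + 6 by lia.
  + exact: (@Hadj_tar_connected r 5 r_gt1 isT).
  + exact: (@Hadj_tar_connected r 6 r_gt1 isT).
- move=> k k_lt good; apply: (Hadj_tar_disconnected4 r_gt1); apply: good.
  by rewrite cardT; apply/andP; split; lia.
Qed.
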